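(* Let $\left\{\mathcal{N}^{(i)}_{A \to B }\right\}_{i=1}^s$ be a compound quantum channel and let $\varepsilon \in (0,1)$. For any $(R,\varepsilon)$-entanglement assisted code for this compound quantum channel, it holds that $$R \leq \max _{|\psi\rangle\langle\psi|_{A A'}} \left( \min_{i \in [1:s]} \mathrm{I}^{\varepsilon}_{\mathrm{H}}(B:A')_{\mathcal{N}^{(i)}_{A \to B } (|\psi\rangle\langle\psi|_{AA'})} \right).$$
   Context: Here $A'\equiv A$ is a purifying register. For quantum states $\rho,\sigma$, $\mathrm{D}^{\varepsilon}_{\mathrm{H}}(\rho\|\sigma) := \max_{0\preceq M\preceq \mathbb{I},\ \mathrm{Tr}[M\rho]\geq 1-\varepsilon} -\log\mathrm{Tr}[M\sigma]$, and for a bipartite state $\rho_{BA'}$, $\mathrm{I}^{\varepsilon}_{\mathrm{H}}(B:A')_{\rho} := \min_{\sigma_B} \mathrm{D}^{\varepsilon}_{\mathrm{H}}(\rho_{BA'}\|\sigma_B\otimes\rho_{A'})$ over all quantum states $\sigma_B$. An $(R,\varepsilon)$-entanglement assisted code for the compound channel $\{\mathcal{N}^{(i)}_{A\to B}\}_{i=1}^s$ (channel index unknown to both parties) consists of a shared entangled state $|\theta\rangle_{E_AE_B}$, an encoding $\mathcal{E}: ME_A\to A$ (messages in $[1:2^R]$) and a decoding $\mathcal{D}: BE_B\to M'$, with $\Pr\{M'\neq m\mid M=m\}\leq\varepsilon$ for all messages $m$ and all $i\in[1:s]$. *)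

From HB Require Import structures.
From mathcomp Require Import all_boot all_order all_algebra.
From mathcomp Require Import complex mxtens.
From mathcomp Require Import boolp classical_sets reals constructive_ereal ereal exp.
Set Implicit Arguments. Unset Strict Implicit. Unset Printing Implicit Defensive.
Import Order.TTheory GRing.Theory Num.Theory.
Local Open Scope ring_scope.

Section QDefs.
Variable R : realType.
Local Notation C := (R[i]).

Definition adjmx m n (A : 'M[C]_(m, n)) : 'M[C]_(n, m) :=
  \matrix_(i, j) conjc (A j i).

Definition psd n (A : 'M[C]_n) : Prop :=
  A = adjmx A /\ forall v : 'cV[C]_n, 0 <= (adjmx v *m A *m v) 0 0.

Definition loewner n (A B : 'M[C]_n) : Prop := psd (B - A).

Definition density n (rho : 'M[C]_n) : Prop := psd rho /\ \tr rho = 1.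

Definition unit_vec n (v : 'cV[C]_n) : Prop := (adjmx v *m v) 0 0 = 1.
Definition proj n (v : 'cV[C]_n) : 'M[C]_n := v *m adjmx v.

(* Tensor product of two linear maps on matrices, defined on the basis of
   matrix units; the tensor product of spaces X (x) Y is indexed by
   mxtens_index (x, y) (first factor = outer index), as for [tensmx]. *)
Definition tens_map m1 n1 m2 n2 (Phi : 'M[C]_m1 -> 'M[C]_n1)
  (Psi : 'M[C]_m2 -> 'M[C]_n2) (X : 'M[C]_(m1 * m2)) : 'M[C]_(n1 * n2) :=
  \sum_(a < m1) \sum_(b < m1) \sum_(c < m2) \sum_(d < m2)
    X (mxtens_index (a, c)) (mxtens_index (b, d))
      *: (Phi (delta_mx a b) *t Psi (delta_mx c d)).

Definition linear_map m n (Phi : 'M[C]_m -> 'M[C]_n) : Prop :=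
  forall (a : C) (X Y : 'M[C]_m), Phi (a *: X + Y) = a *: Phi X + Phi Y.

Definition completely_positive m n (Phi : 'M[C]_m -> 'M[C]_n) : Prop :=
  forall (k : nat) (X : 'M[C]_(k * m)),
    psd X -> psd (tens_map (@id 'M[C]_k) Phi X).

Definition trace_preserving m n (Phi : 'M[C]_m -> 'M[C]_n) : Prop :=
  forall X : 'M[C]_m, \tr (Phi X) = \tr X.

Definition channel m n (Phi : 'M[C]_m -> 'M[C]_n) : Prop :=
  [/\ linear_map Phi, completely_positive Phi & trace_preserving Phi].

Definition povm K n (Lam : 'I_K -> 'M[C]_n) : Prop :=
  (forall k, psd (Lam k)) /\ \sum_(k < K) Lam k = 1%:M.

Definition ptrace1 m n (X : 'M[C]_(m * n)) : 'M[C]_n :=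
  \matrix_(j, l) \sum_(i < m) X (mxtens_index (i, j)) (mxtens_index (i, l)).

Definition log2 (x : R) : R := ln x / ln 2.

Definition neglog2 (t : R) : \bar R :=
  if t == 0 then +oo%E else (- log2 t)%:E.

Definition DH n (eps : R) (rho sigma : 'M[C]_n) : \bar R :=
  ereal_sup [set y : \bar R | exists M : 'M[C]_n,
    [/\ loewner 0 M, loewner M 1%:M,
        (((1 - eps)%:C)%C <= \tr (M *m rho))%R
      & y = neglog2 (complex.Re (\tr (M *m sigma)))]].

(* hypothesis testing mutual information I_H^eps(B:A')_rho, rho on B (x) A' *)
Definition IH m n (eps : R) (rho : 'M[C]_(m * n)) : \bar R :=
  ereal_inf [set y : \bar R | exists sigma : 'M[C]_m,
    density sigma /\ y = DH eps rho (sigma *t ptrace1 rho)].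

End QDefs.

From HB Require Import structures.
From mathcomp Require Import all_boot all_order all_algebra.
From mathcomp Require Import complex mxtens.
From mathcomp Require Import boolp classical_sets reals constructive_ereal ereal exp.
From mathcomp Require Import sesquilinear spectral.
Import Order.TTheory GRing.Theory Num.Theory.
Local Open Scope ring_scope.

(* The family (1/K) (Enc_m (x) id)(theta) of operators on A (x) E_B has a joint
   purification whose reference system can be compressed to a copy A' of A.
   This yields a pure state psi on A (x) A' and Kraus operators V_(m,j) : A' -> E_B
   with sum_(m,j) V_(m,j)^* V_(m,j) = 1 that regenerate the code states:
   sum_j (1 (x) V_(m,j)) |psi><psi| (1 (x) V_(m,j))^* = (1/K) (Enc_m (x) id)(theta).
   Pulling the decoder back gives the test T = sum_(m,j) (1 (x) V_(m,j))^* Dec_m (1 (x) V_(m,j))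
   on B (x) A', with 0 <= T <= 1.  The V_(m,j) act on A' only, so they commute with
   N_i (x) id: Tr[T (N_i (x) id)(psi)] is the average success probability of the code,
   at least 1 - eps, whereas Tr[T (sigma (x) psi_A')] = (1/K) sum_m Tr[Dec_m (sigma (x) theta_E_B)]
   = 1/K for every state sigma.  Hence D_H^eps >= log K against every sigma (x) psi_A'. *)

Section Matrices.
Context {R : realType}.
Local Notation C := R[i].
Local Notation ix := mxtens_index.
Local Notation unix := mxtens_unindex.

Lemma big_mxtens_index (V : nmodType) m n (F : 'I_(m * n) -> V) :
  \sum_k F k = \sum_i \sum_j F (ix (i, j)).
Proof.
rewrite pair_big /= (reindex (@mxtens_index m n)) /=; last first.
  by exists (@mxtens_unindex m n) => k _; rewrite (mxtens_indexK, mxtens_unindexK).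
by apply: eq_bigr => -[i j].
Qed.

Lemma exchange_big_pairs (V : nmodType) m n p q (F : 'I_m -> 'I_n -> 'I_p -> 'I_q -> V) :
  \sum_a \sum_b \sum_c \sum_d F a b c d = \sum_c \sum_d \sum_a \sum_b F a b c d.
Proof.
under eq_bigr do rewrite exchange_big.
under eq_bigr do under eq_bigr do rewrite exchange_big.
by rewrite exchange_big; apply: eq_bigr => c _; rewrite exchange_big.
Qed.

Lemma adjmx_mul m n p (A : 'M[C]_(m, n)) (B : 'M[C]_(n, p)) :
  adjmx (A *m B) = adjmx B *m adjmx A.
Proof.
apply/matrixP=> i j; rewrite !mxE rmorph_sum; apply: eq_bigr => k _.
by rewrite !mxE rmorphM mulrC.
Qed.

Lemma adjmxK m n (A : 'M[C]_(m, n)) : adjmx (adjmx A) = A.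
Proof. by apply/matrixP=> i j; rewrite !mxE conjcK. Qed.

Lemma adjmxD m n (A B : 'M[C]_(m, n)) : adjmx (A + B) = adjmx A + adjmx B.
Proof. by apply/matrixP=> i j; rewrite !mxE rmorphD. Qed.

Lemma adjmxZ m n (c : C) (A : 'M[C]_(m, n)) : adjmx (c *: A) = c^* *: adjmx A.
Proof. by apply/matrixP=> i j; rewrite !mxE rmorphM. Qed.

Lemma adjmx1 n : adjmx (1%:M : 'M[C]_n) = 1%:M.
Proof. by apply/matrixP=> i j; rewrite !mxE rmorph_nat eq_sym. Qed.

Lemma adjmx_tens m n p q (A : 'M[C]_(m, n)) (B : 'M[C]_(p, q)) :
  adjmx (A *t B) = adjmx A *t adjmx B.
Proof.
apply/matrixP=> i j.
case: (mxtens_indexP i) => i0 i1; case: (mxtens_indexP j) => j0 j1.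
by rewrite tensmxE !mxE !mxtens_indexK rmorphM.
Qed.

Lemma adjmx_trmxC m n (A : 'M[C]_(m, n)) : adjmx A = map_mx Num.conj A^T.
Proof. by apply/matrixP=> i j; rewrite !mxE. Qed.

Lemma tensmx_suml m n p q (I : finType) (F : I -> 'M[C]_(m, n)) (B : 'M[C]_(p, q)) :
  (\sum_i F i) *t B = \sum_i F i *t B.
Proof.
apply/matrixP=> i j; rewrite summxE mxE summxE mulr_suml.
by apply: eq_bigr => k _; rewrite !mxE.
Qed.

Lemma tensmx_sumr m n p q (I : finType) (A : 'M[C]_(m, n)) (F : I -> 'M[C]_(p, q)) :
  A *t (\sum_i F i) = \sum_i A *t F i.
Proof.
apply/matrixP=> i j; rewrite summxE mxE summxE mulr_sumr.
by apply: eq_bigr => k _; rewrite !mxE.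
Qed.

Lemma tensmxZl m n p q (c : C) (A : 'M[C]_(m, n)) (B : 'M[C]_(p, q)) :
  (c *: A) *t B = c *: (A *t B).
Proof. by apply/matrixP=> i j; rewrite !mxE mulrA. Qed.

Lemma tensmxZr m n p q (c : C) (A : 'M[C]_(m, n)) (B : 'M[C]_(p, q)) :
  A *t (c *: B) = c *: (A *t B).
Proof. by apply/matrixP=> i j; rewrite !mxE mulrCA. Qed.

Lemma tensmx11 m n : (1%:M : 'M[C]_m) *t (1%:M : 'M[C]_n) = 1%:M.
Proof.
apply/matrixP=> i j.
case: (mxtens_indexP i) => i0 i1; case: (mxtens_indexP j) => j0 j1.
rewrite tensmxE !mxE -natrM mulnb; congr (_%:R).
by rewrite (inj_eq (can_inj (@mxtens_indexK _ _))) xpair_eqE.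
Qed.

Lemma mxtrace_tens m n (A : 'M[C]_m) (B : 'M[C]_n) : \tr (A *t B) = \tr A * \tr B.
Proof.
rewrite /mxtrace big_mxtens_index mulr_suml; apply: eq_bigr => i _.
by rewrite mulr_sumr; apply: eq_bigr => j _; rewrite tensmxE.
Qed.

Lemma mxtrace_delta n (a b : 'I_n) : \tr (delta_mx a b : 'M[C]_n) = (a == b)%:R.
Proof.
rewrite /mxtrace (bigD1 a) //= big1 => [|k /negPf ne]; rewrite !mxE ?ne //.
by rewrite eqxx addr0.
Qed.

Definition swap_index m n (k : 'I_(m * n)) : 'I_(n * m) := ix ((unix k).2, (unix k).1).

Lemma swap_indexK m n : cancel (@swap_index m n) (@swap_index n m).
Proof.
move=> k; rewrite /swap_index mxtens_indexK -[RHS]mxtens_unindexK.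
by case: (unix k).
Qed.

Definition swapmx {m n} (X : 'M[C]_(m * n)) : 'M[C]_(n * m) :=
  mxsub (@swap_index n m) (@swap_index n m) X.

HB.instance Definition _ m n :=
  GRing.Linear.copy (@swapmx m n) (mxsub (@swap_index n m) (@swap_index n m)).

Lemma swapmx_tens m n (A : 'M[C]_m) (B : 'M[C]_n) : swapmx (A *t B) = B *t A.
Proof.
apply/matrixP=> i j.
case: (mxtens_indexP i) => i0 i1; case: (mxtens_indexP j) => j0 j1.
by rewrite mxE /swap_index !mxtens_indexK /= !tensmxE mulrC.
Qed.

End Matrices.

Section Positivity.
Context {R : realType}.
Local Notation C := R[i].

Lemma psd_adj_mul_mul p n (D : 'M[C]_p) (W : 'M[C]_(p, n)) :
  psd D -> psd (adjmx W *m D *m W).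
Proof.
move=> [hD qD]; split; first by rewrite !adjmx_mul adjmxK -hD mulmxA.
by move=> v; rewrite -!mulmxA !mulmxA -adjmx_mul -[_ *m v]mulmxA; apply: qD.
Qed.

Lemma psd0 n : psd (0 : 'M[C]_n).
Proof.
split; first by apply/matrixP=> i j; rewrite !mxE rmorph0.
by move=> v; rewrite mulmx0 mul0mx mxE.
Qed.

Lemma psdD n (A B : 'M[C]_n) : psd A -> psd B -> psd (A + B).
Proof.
move=> [hA qA] [hB qB]; split; first by rewrite adjmxD -hA -hB.
by move=> v; rewrite mulmxDr mulmxDl mxE addr_ge0.
Qed.

Lemma psd_sum n (I : finType) (P : pred I) (F : I -> 'M[C]_n) :
  (forall i, P i -> psd (F i)) -> psd (\sum_(i | P i) F i).
Proof.
move=> F_psd; elim/big_rec: _ => [|i A Pi A_psd]; first exact: psd0.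
exact: psdD (F_psd i Pi) A_psd.
Qed.

Lemma psdZ n (c : C) (A : 'M[C]_n) : 0 <= c -> psd A -> psd (c *: A).
Proof.
move=> c_ge0 [hA qA]; split; first by rewrite adjmxZ geC0_conj // -hA.
by move=> v; rewrite -scalemxAr -scalemxAl mxE mulr_ge0.
Qed.

Lemma psd_proj {n} (v : 'cV[C]_n) : psd (proj v).
Proof.
split; first by rewrite /proj adjmx_mul adjmxK.
move=> w; rewrite /proj mulmxA -mulmxA.
have -> : adjmx v *m w = adjmx (adjmx w *m v) by rewrite adjmx_mul adjmxK.
by rewrite mxE big_ord1 [X in _ * X]mxE mul_conjC_ge0.
Qed.

Lemma psd_factor n (P : 'M[C]_n) : psd P -> exists Y : 'M[C]_n, P = Y *m adjmx Y.
Proof.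
move=> [hP qP].
have P_normal : P \is normalmx by apply/normalmxP; rewrite -adjmx_trmxC -hP.
have P_spectral := orthomx_spectralP P_normal.
set U := spectralmx P in P_spectral; set s := spectral_diag P in P_spectral.
have U_unitary : U \is unitarymx by exact: spectral_unitarymx.
rewrite invmx_unitary // -adjmx_trmxC in P_spectral.
have UU : U *m adjmx U = 1%:M by rewrite adjmx_trmxC; apply/unitarymxP.
have s_ge0 k : 0 <= s 0 k.
  have := qP (adjmx U *m delta_mx k 0).
  rewrite adjmx_mul adjmxK P_spectral -!mulmxA !(mulmxA U) UU !mul1mx.
  have -> : adjmx (delta_mx k 0) = delta_mx 0 k :> 'M[C]_(1, n).
    by apply/matrixP=> i j; rewrite !mxE rmorph_nat andbC.
  by rewrite -colE -rowE !mxE eqxx mulr1n.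
pose r := \row_k sqrtC (s 0 k).
have r_adj : adjmx (diag_mx r) = diag_mx r.
  apply/matrixP=> i j; rewrite !mxE; case: (eqVneq j i) => [->|_].
    by rewrite !mulr1n; apply: (@geC0_conj _ (sqrtC _)); rewrite sqrtC_ge0.
  by rewrite !mulr0n rmorph0.
exists (adjmx U *m diag_mx r).
rewrite adjmx_mul adjmxK r_adj -!mulmxA [diag_mx r *m _]mulmxA mulmx_diag.
rewrite {1}P_spectral -mulmxA; congr (_ *m (diag_mx _ *m _)).
by apply/rowP=> k; rewrite !mxE -expr2 sqrtCK.
Qed.

Lemma factor_coisometry {m n} (F : 'M[C]_(m, n)) : (m <= n)%N ->
  exists (X : 'M[C]_m) (Z : 'M[C]_(m, n)), F = X *m Z /\ Z *m adjmx Z = 1%:M.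
Proof.
move=> le_mn; have /submxP [X ->] := schmidt_sub F.
exists X, (schmidt F); split => //.
by rewrite adjmx_trmxC; apply/unitarymxP/schmidt_unitarymx.
Qed.

Lemma psd_swapmx m n (X : 'M[C]_(m * n)) : psd X -> psd (swapmx X).
Proof.
move=> [hX qX]; split.
  by apply/matrixP=> i j; rewrite !mxE {1}hX mxE.
move=> v; pose w := \col_k v (@swap_index m n k) 0.
have -> : (adjmx v *m swapmx X *m v) 0 0 = (adjmx w *m X *m w) 0 0.
  rewrite !mxE (reindex (@swap_index m n)) /=; last first.
    by exists (@swap_index n m) => k _; rewrite swap_indexK.
  apply: eq_bigr => k _; rewrite !mxE mulr_suml mulr_suml.
  rewrite (reindex (@swap_index m n)) /=; last first.
    by exists (@swap_index n m) => l _; rewrite swap_indexK.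
  by apply: eq_bigr => l _; rewrite !mxE !swap_indexK.
exact: qX.
Qed.

End Positivity.

Section TensorMaps.
Context {R : realType}.
Local Notation C := R[i].
Local Notation ix := mxtens_index.

Definition tens_block {m k} (X : 'M[C]_(m * k)) (a b : 'I_m) : 'M[C]_k :=
  \matrix_(c, d) X (ix (a, c)) (ix (b, d)).

Lemma tens_block_tens m k (A : 'M[C]_m) (B : 'M[C]_k) a b :
  tens_block (A *t B) a b = A a b *: B.
Proof. by apply/matrixP=> c d; rewrite !mxE !mxtens_indexK. Qed.

Lemma sum_delta_tensE m k (F : 'I_m -> 'I_m -> 'M[C]_k) a b c d :
  (\sum_a' \sum_b' delta_mx a' b' *t F a' b') (ix (a, c)) (ix (b, d)) = F a b c d.
Proof.
rewrite summxE (bigD1 a) //= [X in _ + X]big1 => [|a' /negPf ne]; last first.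
  by rewrite summxE big1 // => b' _; rewrite tensmxE mxE (eq_sym a) ne mul0r.
rewrite addr0 summxE (bigD1 b) //= [X in _ + X]big1 => [|b' /negPf ne].
  by rewrite tensmxE mxE !eqxx mul1r addr0.
by rewrite tensmxE mxE (eq_sym b) ne andbF mul0r.
Qed.

Lemma tens_block_decomposition m k (X : 'M[C]_(m * k)) :
  X = \sum_a \sum_b delta_mx a b *t tens_block X a b.
Proof.
apply/matrixP=> i j.
case: (mxtens_indexP i) => a c; case: (mxtens_indexP j) => b d.
by rewrite sum_delta_tensE mxE.
Qed.

Lemma tens_block_sum_delta m k (F : 'I_m -> 'I_m -> 'M[C]_k) a b :
  tens_block (\sum_a' \sum_b' delta_mx a' b' *t F a' b') a b = F a b.
Proof. by apply/matrixP=> c d; rewrite mxE sum_delta_tensE. Qed.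

Fact tens_map_is_linear m1 n1 m2 n2 (Phi : 'M[C]_m1 -> 'M[C]_n1)
  (Psi : 'M[C]_m2 -> 'M[C]_n2) : linear (tens_map Phi Psi).
Proof.
move=> c X Y; rewrite /tens_map.
do 4!(rewrite scaler_sumr -big_split; apply: eq_bigr => ? _).
by rewrite !mxE scalerDl scalerA.
Qed.

HB.instance Definition _ m1 n1 m2 n2 Phi Psi :=
  GRing.isLinear.Build C 'M[C]_(m1 * m2) 'M[C]_(n1 * n2) *:%R
    (@tens_map R m1 n1 m2 n2 Phi Psi) (@tens_map_is_linear m1 n1 m2 n2 Phi Psi).

Lemma tens_mapE m n k (Phi : 'M[C]_m -> 'M[C]_n) (X : 'M[C]_(m * k)) :
  tens_map Phi (@id 'M[C]_k) X = \sum_a \sum_b Phi (delta_mx a b) *t tens_block X a b.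
Proof.
apply: eq_bigr => a _; apply: eq_bigr => b _.
rewrite [tens_block X a b]matrix_sum_delta tensmx_sumr; apply: eq_bigr => c _.
by rewrite tensmx_sumr; apply: eq_bigr => d _; rewrite tensmxZr mxE.
Qed.

Lemma linear_map_expand {m n} {Phi : 'M[C]_m -> 'M[C]_n} : linear_map Phi ->
  forall Y, Phi Y = \sum_a \sum_b Y a b *: Phi (delta_mx a b).
Proof.
move=> Phi_lin Y.
have Phi0 : Phi 0 = 0.
  have := Phi_lin 1 0 0; rewrite !scale1r addr0 => Phi00.
  by apply: (@addrI _ (Phi 0)); rewrite addr0 -Phi00.
have PhiD : {morph Phi : X Y / X + Y}.
  by move=> X Z; rewrite -[X in X + _]scale1r Phi_lin scale1r.
have PhiZ c X : Phi (c *: X) = c *: Phi X by rewrite -[_ *: X]addr0 Phi_lin Phi0 addr0.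
rewrite {1}[Y]matrix_sum_delta (big_morph Phi PhiD Phi0); apply: eq_bigr => a _.
by rewrite (big_morph Phi PhiD Phi0); apply: eq_bigr => b _; rewrite PhiZ.
Qed.

Lemma tens_map_tens m n k (Phi : 'M[C]_m -> 'M[C]_n) (A : 'M[C]_m) (B : 'M[C]_k) :
  linear_map Phi -> tens_map Phi (@id 'M[C]_k) (A *t B) = Phi A *t B.
Proof.
move=> Phi_lin; rewrite tens_mapE (linear_map_expand Phi_lin A) tensmx_suml.
apply: eq_bigr => a _; rewrite tensmx_suml; apply: eq_bigr => b _.
by rewrite tens_block_tens tensmxZr tensmxZl.
Qed.

Lemma tens_map_comp m n p k (Phi : 'M[C]_n -> 'M[C]_p) (Psi : 'M[C]_m -> 'M[C]_n)
    (X : 'M[C]_(m * k)) : linear_map Phi ->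
  tens_map Phi (@id 'M[C]_k) (tens_map Psi (@id 'M[C]_k) X)
  = tens_map (Phi \o Psi) (@id 'M[C]_k) X.
Proof.
move=> Phi_lin; rewrite [tens_map Psi _ X]tens_mapE [RHS]tens_mapE raddf_sum.
apply: eq_bigr => a _; rewrite raddf_sum; apply: eq_bigr => b _.
exact: tens_map_tens.
Qed.

(* [completely_positive] lets the map act on the second tensor factor only;
   conjugating by the swap of factors moves it to the first. *)
Lemma tens_map_swapmx m n k (Phi : 'M[C]_m -> 'M[C]_n) (X : 'M[C]_(m * k)) :
  tens_map Phi (@id 'M[C]_k) X = swapmx (tens_map (@id 'M[C]_k) Phi (swapmx X)).
Proof.
rewrite /tens_map exchange_big_pairs raddf_sum; apply: eq_bigr => c _.
rewrite raddf_sum; apply: eq_bigr => d _; rewrite raddf_sum; apply: eq_bigr => a _.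
rewrite raddf_sum; apply: eq_bigr => b _.
by rewrite /= linearZ /= !mxE swapmx_tens /swap_index !mxtens_indexK.
Qed.

Lemma psd_tens_map_left {m n k} {Phi : 'M[C]_m -> 'M[C]_n} {X : 'M[C]_(m * k)} :
  completely_positive Phi -> psd X -> psd (tens_map Phi (@id 'M[C]_k) X).
Proof.
by move=> Phi_cp X_psd; rewrite tens_map_swapmx; apply/psd_swapmx/Phi_cp/psd_swapmx.
Qed.

End TensorMaps.

Section Kraus.
Context {R : realType}.
Local Notation C := R[i].

Definition kraus_map {m n} {J : finType} (V : J -> 'M[C]_(n, m)) (X : 'M[C]_m) : 'M[C]_n :=
  \sum_j V j *m X *m adjmx (V j).

Definition kraus_dual {m n} {J : finType} (V : J -> 'M[C]_(n, m)) (Y : 'M[C]_n) : 'M[C]_m :=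
  \sum_j adjmx (V j) *m Y *m V j.

Definition ampl {m n} k {J : finType} (V : J -> 'M[C]_(n, m)) (j : J) : 'M[C]_(k * n, k * m) :=
  1%:M *t V j.

Fact kraus_map_is_linear m n (J : finType) (V : J -> 'M[C]_(n, m)) : linear (kraus_map V).
Proof.
move=> c X Y; rewrite /kraus_map scaler_sumr -big_split; apply: eq_bigr => j _.
by rewrite mulmxDr mulmxDl -scalemxAr -scalemxAl.
Qed.

HB.instance Definition _ m n J V :=
  GRing.isLinear.Build C 'M[C]_m 'M[C]_n *:%R (@kraus_map m n J V)
    (@kraus_map_is_linear m n J V).

Fact kraus_dual_is_linear m n (J : finType) (V : J -> 'M[C]_(n, m)) : linear (kraus_dual V).
Proof.
move=> c X Y; rewrite /kraus_dual scaler_sumr -big_split; apply: eq_bigr => j _.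
by rewrite mulmxDr mulmxDl -scalemxAr -scalemxAl.
Qed.

HB.instance Definition _ m n J V :=
  GRing.isLinear.Build C 'M[C]_n 'M[C]_m *:%R (@kraus_dual m n J V)
    (@kraus_dual_is_linear m n J V).

Lemma mxtrace_kraus_dual m n (J : finType) (V : J -> 'M[C]_(n, m)) Y X :
  \tr (kraus_dual V Y *m X) = \tr (Y *m kraus_map V X).
Proof.
rewrite /kraus_dual /kraus_map mulmx_suml mulmx_sumr !raddf_sum.
by apply: eq_bigr => j _; rewrite /= -!mulmxA mxtrace_mulC !mulmxA.
Qed.

Lemma psd_kraus_dual m n (J : finType) (V : J -> 'M[C]_(n, m)) Y :
  psd Y -> psd (kraus_dual V Y).
Proof. by move=> Y_psd; apply: psd_sum => j _; apply: psd_adj_mul_mul. Qed.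

Lemma kraus_map_ampl_tens m n k (J : finType) (V : J -> 'M[C]_(n, m)) (A : 'M[C]_k) B :
  kraus_map (ampl k V) (A *t B) = A *t kraus_map V B.
Proof.
rewrite /kraus_map tensmx_sumr; apply: eq_bigr => j _.
by rewrite /ampl adjmx_tens adjmx1 !tensmx_mul mul1mx mulmx1.
Qed.

Lemma kraus_dual_ampl_tens m n k (J : finType) (V : J -> 'M[C]_(n, m)) (A : 'M[C]_k) B :
  kraus_dual (ampl k V) (A *t B) = A *t kraus_dual V B.
Proof.
rewrite /kraus_dual tensmx_sumr; apply: eq_bigr => j _.
by rewrite /ampl adjmx_tens adjmx1 !tensmx_mul mul1mx mulmx1.
Qed.

Lemma kraus_dual_ampl_unital {m n} k {I J : finType} {V : I -> J -> 'M[C]_(n, m)} :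
  \sum_i kraus_dual (V i) 1%:M = 1%:M -> \sum_i kraus_dual (ampl k (V i)) 1%:M = 1%:M.
Proof.
move=> V_unital; under eq_bigr do rewrite -[1%:M]tensmx11 kraus_dual_ampl_tens.
by rewrite -tensmx_sumr V_unital tensmx11.
Qed.

Lemma tens_block_kraus_ampl m n k (J : finType) (V : J -> 'M[C]_(n, m))
    (X : 'M[C]_(k * m)) a b :
  tens_block (kraus_map (ampl k V) X) a b = kraus_map V (tens_block X a b).
Proof.
rewrite {1}[X]tens_block_decomposition raddf_sum.
under eq_bigr do rewrite raddf_sum.
under eq_bigr do under eq_bigr do rewrite /= kraus_map_ampl_tens.
exact: tens_block_sum_delta.
Qed.

Lemma tens_map_kraus_ampl m n p k (J : finType) (Phi : 'M[C]_m -> 'M[C]_n)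
    (V : J -> 'M[C]_(p, k)) (X : 'M[C]_(m * k)) :
  tens_map Phi (@id 'M[C]_p) (kraus_map (ampl m V) X)
  = kraus_map (ampl n V) (tens_map Phi (@id 'M[C]_k) X).
Proof.
rewrite !tens_mapE raddf_sum; apply: eq_bigr => a _.
rewrite raddf_sum; apply: eq_bigr => b _.
by rewrite /= kraus_map_ampl_tens tens_block_kraus_ampl.
Qed.

Fact ptrace1_is_linear m n : linear (@ptrace1 R m n).
Proof.
move=> c X Y; apply/matrixP=> i j; rewrite !mxE mulr_sumr -big_split.
by apply: eq_bigr => k _; rewrite !mxE.
Qed.

HB.instance Definition _ m n :=
  GRing.isLinear.Build C 'M[C]_(m * n) 'M[C]_n *:%R (@ptrace1 R m n)
    (@ptrace1_is_linear m n).

Lemma ptrace1_tens m n (A : 'M[C]_m) (B : 'M[C]_n) : ptrace1 (A *t B) = \tr A *: B.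
Proof.
apply/matrixP=> j l; rewrite !mxE mulr_suml; apply: eq_bigr => i _.
by rewrite !mxE !mxtens_indexK.
Qed.

Lemma ptrace1_blocks m n (X : 'M[C]_(m * n)) : ptrace1 X = \sum_a tens_block X a a.
Proof. by apply/matrixP=> j l; rewrite !mxE summxE; apply: eq_bigr => i _; rewrite mxE. Qed.

Lemma ptrace1_tens_map m n k (Phi : 'M[C]_m -> 'M[C]_n) (X : 'M[C]_(m * k)) :
  trace_preserving Phi -> ptrace1 (tens_map Phi (@id 'M[C]_k) X) = ptrace1 X.
Proof.
move=> Phi_tp; rewrite tens_mapE [RHS]ptrace1_blocks raddf_sum; apply: eq_bigr => a _.
rewrite raddf_sum (bigD1 a) //= big1 => [|b /negPf ne].
  by rewrite /= ptrace1_tens Phi_tp mxtrace_delta eqxx scale1r addr0.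
by rewrite /= ptrace1_tens Phi_tp mxtrace_delta eq_sym ne scale0r.
Qed.

Lemma ptrace1_kraus_ampl m n k (J : finType) (V : J -> 'M[C]_(n, m)) (X : 'M[C]_(k * m)) :
  ptrace1 (kraus_map (ampl k V) X) = kraus_map V (ptrace1 X).
Proof.
rewrite !ptrace1_blocks raddf_sum.
by apply: eq_bigr => a _; rewrite /= tens_block_kraus_ampl.
Qed.

Lemma mxtrace_ptrace1 m n (X : 'M[C]_(m * n)) : \tr (ptrace1 X) = \tr X.
Proof.
rewrite /mxtrace [RHS]big_mxtens_index exchange_big.
by apply: eq_bigr => j _; rewrite mxE.
Qed.

Lemma mxtrace_tens_map m n k (Phi : 'M[C]_m -> 'M[C]_n) (X : 'M[C]_(m * k)) :
  trace_preserving Phi -> \tr (tens_map Phi (@id 'M[C]_k) X) = \tr X.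
Proof. by move=> Phi_tp; rewrite -mxtrace_ptrace1 ptrace1_tens_map ?mxtrace_ptrace1. Qed.

End Kraus.

Section Purification.
Context {R : realType}.
Local Notation C := R[i].
Local Notation ix := mxtens_index.
Local Notation unix := mxtens_unindex.

Definition vecmx {m n} (X : 'M[C]_(m, n)) : 'cV[C]_(m * n) :=
  \col_k X (unix k).1 (unix k).2.

Lemma vecmxE m n (X : 'M[C]_(m, n)) i j : vecmx X (ix (i, j)) 0 = X i j.
Proof. by rewrite mxE mxtens_indexK. Qed.

Lemma tensmx_mul_vecmx m n p q (A : 'M[C]_(m, n)) (B : 'M[C]_(p, q)) (X : 'M[C]_(n, q)) :
  (A *t B) *m vecmx X = vecmx (A *m X *m trmx B).
Proof.
apply/matrixP=> k l; rewrite [l]ord1; case: (mxtens_indexP k) => i j.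
rewrite vecmxE mxE big_mxtens_index exchange_big mxE; apply: eq_bigr => y _.
rewrite !mxE mulr_suml; apply: eq_bigr => x _.
by rewrite tensmxE vecmxE mulrAC.
Qed.

Lemma proj_mul m n (W : 'M[C]_(m, n)) (v : 'cV[C]_n) :
  W *m proj v *m adjmx W = proj (W *m v).
Proof. by rewrite /proj adjmx_mul !mulmxA. Qed.

Lemma mulmx_adj_sum_proj m n (Y : 'M[C]_(m, n)) : Y *m adjmx Y = \sum_j proj (col j Y).
Proof.
apply/matrixP=> i k; rewrite !mxE summxE; apply: eq_bigr => j _.
by rewrite !mxE big_ord1 !mxE.
Qed.

Lemma mxtrace_proj n (v : 'cV[C]_n) : \tr (proj v) = (adjmx v *m v) 0 0.
Proof. by rewrite /proj mxtrace_mulC trace_mx11. Qed.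

Lemma unit_vec_dim_gt0 {n} {v : 'cV[C]_n} : unit_vec v -> (0 < n)%N.
Proof.
by case: n v => // v; rewrite /unit_vec mxE big_ord0 => /eqP; rewrite eq_sym oner_eq0.
Qed.

Lemma purification {a e k} {G : 'I_k -> 'M[C]_(a * e)} :
  (0 < k)%N -> (0 < e)%N -> (forall m, psd (G m)) ->
  exists (psi : 'cV[C]_(a * a)) (V : 'I_k -> 'I_(a * e) -> 'M[C]_(e, a)),
    \sum_m kraus_dual (V m) 1%:M = 1%:M /\
    forall m, kraus_map (ampl a (V m)) (proj psi) = G m.
Proof.
move=> k_gt0 e_gt0 G_psd.
have /choice [Y GY] : forall m, exists Y : 'M[C]_(a * e), G m = Y *m adjmx Y.
  by move=> m; apply: psd_factor.
(* Phi, read as a vector of A (x) (M (x) E (x) J), jointly purifies the G m;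
   writing Phi = X Z with Z a coisometry compresses M (x) E (x) J to A, and the
   slices of Z are the Kraus operators. *)
pose Phi : 'M[C]_(a, k * (e * (a * e))) := \matrix_(x, l)
  Y (unix l).1 (ix (x, (unix (unix l).2).1)) (unix (unix l).2).2.
have a_le : (a <= k * (e * (a * e)))%N.
  exact: leq_trans (leq_pmulr a e_gt0) (leq_trans (leq_pmull _ e_gt0) (leq_pmull _ k_gt0)).
have [X [Z [PhiXZ ZZ]]] := factor_coisometry Phi a_le.
pose V m j : 'M[C]_(e, a) := \matrix_(c, y) Z y (ix (m, ix (c, j))).
exists (vecmx X), V; split.
  apply/matrixP=> y y'; have := congr1 (fun M : 'M[C]_a => M y' y) ZZ.
  rewrite !mxE eq_sym => <-; rewrite big_mxtens_index summxE; apply: eq_bigr => m _.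
  rewrite big_mxtens_index summxE exchange_big; apply: eq_bigr => j _.
  rewrite mulmx1 mxE; apply: eq_bigr => c _.
  by rewrite !mxE mulrC.
move=> m; rewrite /kraus_map GY mulmx_adj_sum_proj; apply: eq_bigr => j _.
rewrite proj_mul tensmx_mul_vecmx mul1mx; congr proj.
apply/matrixP=> l i0; rewrite [i0]ord1; case: (mxtens_indexP l) => x c.
have := congr1 (fun M : 'M[C]_(a, _) => M x (ix (m, ix (c, j)))) PhiXZ.
rewrite vecmxE !mxE !mxtens_indexK => ->.
by apply: eq_bigr => y _; rewrite !mxE.
Qed.

End Purification.

Section HypothesisTesting.
Context {R : realType}.
Local Notation C := R[i].

Lemma log2_le_IH m n (eps : R) (rho : 'M[C]_(m * n)) (K : nat) : (0 < K)%N ->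
  (forall sigma : 'M[C]_m, density sigma -> exists M : 'M[C]_(m * n),
     [/\ loewner 0 M, loewner M 1%:M, ((1 - eps)%:C)%C <= \tr (M *m rho)
       & \tr (M *m (sigma *t ptrace1 rho)) = K%:R^-1]) ->
  ((log2 K%:R)%:E <= IH eps rho)%E.
Proof.
move=> K_gt0 tests; apply/ereal_infP => _ [sigma [/tests[M [M_ge0 M_le1 M_rho M_sigma]] ->]].
apply: ereal_sup_ubound; exists M; split => //.
have K_gt0' : 0 < (K%:R : R) by rewrite ltr0n.
rewrite M_sigma -(rmorph_nat (real_complex R)) -fmorphV /neglog2 /=.
by rewrite invr_eq0 (negbTE (lt0r_neq0 K_gt0')) /log2 lnV ?posrE // mulNr opprK.
Qed.

End HypothesisTesting.

Section KrausTest.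
Context {R : realType} {n e a K : nat} {J : finType}.
Local Notation C := R[i].

Definition kraus_test (Dec : 'I_K -> 'M[C]_(n * e)) (V : 'I_K -> J -> 'M[C]_(e, a)) :
  'M[C]_(n * a) := \sum_m kraus_dual (ampl n (V m)) (Dec m).

Context {Dec : 'I_K -> 'M[C]_(n * e)} {V : 'I_K -> J -> 'M[C]_(e, a)}.

Lemma mxtrace_kraus_test X :
  \tr (kraus_test Dec V *m X) = \sum_m \tr (Dec m *m kraus_map (ampl n (V m)) X).
Proof.
rewrite /kraus_test mulmx_suml raddf_sum.
by apply: eq_bigr => m _; rewrite /= mxtrace_kraus_dual.
Qed.

Hypotheses (Dec_povm : povm Dec) (V_unital : \sum_m kraus_dual (V m) 1%:M = 1%:M).

Lemma kraus_test_ge0 : loewner 0 (kraus_test Dec V).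
Proof.
have [Dec_psd _] := Dec_povm.
by rewrite /loewner subr0; apply: psd_sum => m _; apply: psd_kraus_dual.
Qed.

Lemma kraus_test_le1 : loewner (kraus_test Dec V) 1%:M.
Proof.
have [Dec_psd Dec_sum] := Dec_povm.
rewrite /loewner -(kraus_dual_ampl_unital n V_unital) /kraus_test -sumrB.
apply: psd_sum => m _.
rewrite -raddfB; apply: psd_kraus_dual.
by rewrite -Dec_sum (bigD1 m) //= addrC addrK; apply: psd_sum.
Qed.

End KrausTest.

Section Converse.
Context {R : realType} {dA dB dEA dEB K : nat}.
Local Notation C := R[i].
Context {Nc : 'M[C]_dA -> 'M[C]_dB} {Enc : 'I_K -> 'M[C]_dEA -> 'M[C]_dA}
  {theta : 'cV[C]_(dEA * dEB)} {V : 'I_K -> 'I_(dA * dEB) -> 'M[C]_(dEB, dA)}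
  {psi : 'cV[C]_(dA * dA)} {Dec : 'I_K -> 'M[C]_(dB * dEB)}.
Hypotheses (Nc_channel : channel Nc) (Enc_channel : forall m, channel (Enc m))
  (theta_unit : unit_vec theta)
  (V_unital : \sum_m kraus_dual (V m) 1%:M = 1%:M)
  (V_purifies : forall m, kraus_map (ampl dA (V m)) (proj psi)
                          = K%:R^-1 *: tens_map (Enc m) (@id 'M[C]_dEB) (proj theta)).

Lemma purified_unit : (0 < K)%N -> unit_vec psi.
Proof.
move=> K_gt0; have Enc_tp m : trace_preserving (Enc m) by case: (Enc_channel m).
rewrite /unit_vec -mxtrace_proj -[proj psi]mul1mx -(kraus_dual_ampl_unital dA V_unital).
rewrite mulmx_suml raddf_sum.
under eq_bigr do rewrite /= mxtrace_kraus_dual mul1mx V_purifies mxtraceZ mxtrace_tens_map //.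
rewrite mxtrace_proj theta_unit mulr1 sumr_const card_ord -(mulr_natr K%:R^-1) mulVf //.
by rewrite pnatr_eq0 -lt0n.
Qed.

Lemma kraus_channel_output m :
  kraus_map (ampl dB (V m)) (tens_map Nc (@id 'M[C]_dA) (proj psi))
  = K%:R^-1 *: tens_map (Nc \o Enc m) (@id 'M[C]_dEB) (proj theta).
Proof.
have [Nc_linear _ _] := Nc_channel.
by rewrite -tens_map_kraus_ampl V_purifies linearZ /= tens_map_comp.
Qed.

Lemma kraus_product_output m (sigma : 'M[C]_dB) :
  kraus_map (ampl dB (V m)) (sigma *t ptrace1 (tens_map Nc (@id 'M[C]_dA) (proj psi)))
  = sigma *t (K%:R^-1 *: ptrace1 (proj theta)).
Proof.
have [_ _ Nc_tp] := Nc_channel; have [_ _ Enc_tp] := Enc_channel m.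
rewrite kraus_map_ampl_tens ptrace1_tens_map // -ptrace1_kraus_ampl V_purifies.
by rewrite linearZ /= ptrace1_tens_map.
Qed.

Lemma kraus_test_success (eps : R) : (0 < K)%N ->
  (forall m, 1 - \tr (Dec m *m tens_map (Nc \o Enc m) (@id 'M[C]_dEB) (proj theta))
               <= (eps%:C)%C) ->
  ((1 - eps)%:C)%C <= \tr (kraus_test Dec V *m tens_map Nc (@id 'M[C]_dA) (proj psi)).
Proof.
move=> K_gt0 success; rewrite mxtrace_kraus_test.
under eq_bigr do rewrite kraus_channel_output -scalemxAr mxtraceZ.
have -> : ((1 - eps)%:C)%C = K%:R^-1 * \sum_(m < K) ((1 - eps)%:C)%C.
  rewrite sumr_const card_ord -(mulr_natr ((1 - eps)%:C)%C) mulrCA mulVf ?mulr1 //.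
  by rewrite pnatr_eq0 -lt0n.
rewrite -mulr_sumr; apply: ler_wpM2l; first by rewrite invr_ge0 ler0n.
apply: ler_sum => m _; move: (success m).
by rewrite rmorphB rmorph1 lerBlDr addrC -lerBlDr.
Qed.

Lemma kraus_test_product (sigma : 'M[C]_dB) : povm Dec -> density sigma ->
  \tr (kraus_test Dec V *m (sigma *t ptrace1 (tens_map Nc (@id 'M[C]_dA) (proj psi))))
  = K%:R^-1.
Proof.
move=> [_ Dec_sum] [_ sigma_tr]; rewrite mxtrace_kraus_test.
under eq_bigr do rewrite kraus_product_output.
rewrite -raddf_sum /= -mulmx_suml Dec_sum mul1mx mxtrace_tens sigma_tr mul1r mxtraceZ.
by rewrite mxtrace_ptrace1 mxtrace_proj theta_unit mulr1.
Qed.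

End Converse.

Theorem theorem2 (R : realType) (dA dB dEA dEB s K : nat)
  (N : 'I_s -> 'M[R[i]]_dA -> 'M[R[i]]_dB) (eps : R)
  (theta : 'cV[R[i]]_(dEA * dEB))
  (Enc : 'I_K -> 'M[R[i]]_dEA -> 'M[R[i]]_dA)
  (Dec : 'I_K -> 'M[R[i]]_(dB * dEB)) :
  (0 < s)%N -> (0 < K)%N ->
  (forall i, channel (N i)) ->
  0 < eps < 1 ->
  unit_vec theta ->
  (forall m, channel (Enc m)) ->
  povm Dec ->
  (forall (m : 'I_K) (i : 'I_s),
     1 - \tr (Dec m *m tens_map (N i \o Enc m) (@id 'M[R[i]]_dEB) (proj theta))
       <= (eps%:C)%C) ->
  exists psi : 'cV[R[i]]_(dA * dA),
    unit_vec psi /\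
    forall i : 'I_s,
      ((log2 (K%:R : R))%:E <= IH eps (tens_map (N i) (@id 'M[R[i]]_dA) (proj psi)))%E.
Proof.
move=> _ K_gt0 N_channel _ theta_unit Enc_channel Dec_povm success.
pose G m := K%:R^-1 *: tens_map (Enc m) (@id 'M[R[i]]_dEB) (proj theta).
have G_psd m : psd (G m).
  have [_ Enc_cp _] := Enc_channel m.
  apply: psdZ; first by rewrite invr_ge0 ler0n.
  exact: psd_tens_map_left Enc_cp (psd_proj theta).
have dEB_gt0 : (0 < dEB)%N.
  by have := unit_vec_dim_gt0 theta_unit; rewrite muln_gt0 => /andP[].
have [psi [V [V_unital V_purifies]]] := purification K_gt0 dEB_gt0 G_psd.
exists psi; split.
  exact: purified_unit Enc_channel theta_unit V_unital V_purifies K_gt0.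
move=> i; apply: log2_le_IH => // sigma sigma_density.
exists (kraus_test Dec V); split.
- exact: kraus_test_ge0 Dec_povm.
- exact: kraus_test_le1 Dec_povm V_unital.
- exact: kraus_test_success (N_channel i) V_purifies _ K_gt0 (success^~ i).
- exact: kraus_test_product (N_channel i) Enc_channel theta_unit V_purifies _
    Dec_povm sigma_density.
Qed.
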